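(* Let $\mathcal F=(A,X,f)$ be a fuzzy automaton. A word $w\in X^*$ D3-merges two states $a,b\in A$ in $\mathcal F$ if and only if it D3-merges them in the associated NFA $\hat{\mathcal F}$. Consequently, a complete fuzzy automaton is D3-directable if and only if every pair of its states is D3-merged by some word.
   Context: A fuzzy automaton is a triple $\mathcal F=(A,X,f)$ with $A$ a finite nonempty set of states, $X$ a finite nonempty alphabet, and $f:A\times X\times A\to[0,1]$, extended to words by $f^*(a,\varepsilon,a)=1$, $f^*(a,\varepsilon,b)=0$ ($b\neq a$), $f^*(a,vx,b)=\max_{c\in A}\min\{f^*(a,v,c),f(c,x,b)\}$. Let $\mathcal F(a,w)=\{b\in A\mid f^*(a,w,b)>0\}$. $\mathcal F$ is complete if $\mathcal F(a,x)\neq\emptyset$ for all $a\in A$, $x\in X$. A word $w$ D3-merges $a,b$ in $\mathcal F$ if $\mathcal F(a,w)\cap\mathcal F(b,w)\ne\emptyset$. $\mathcal F$ is D3-directable if some $w\in X^*$ and $c\in A$ satisfy $c\in\mathcal F(a,w)$ for all $a\in A$. An NFA $\mathcal N=(A,X)$ assigns to each $x\in X$ a relation $x^{\mathcal N}\subseteq A\times A$, extended to words by $H\varepsilon^{\mathcal N}=H$, $Hx^{\mathcal N}=\bigcup_{a\in H}\{b\mid(a,b)\in x^{\mathcal N}\}$, $H(vx)^{\mathcal N}=(Hv^{\mathcal N})x^{\mathcal N}$, $aw^{\mathcal N}=\{a\}w^{\mathcal N}$; $w$ D3-merges $a,b$ in $\mathcal N$ if $aw^{\mathcal N}\cap bw^{\mathcal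 N}\neq\emptyset$. The associated NFA of $\mathcal F$ is $\hat{\mathcal F}=(A,X)$ with $ax^{\hat{\mathcal F}}=\{b\in A\mid f(a,x,b)>0\}$. *)

From HB Require Import structures.
From mathcomp Require Import all_boot all_order all_algebra.
From mathcomp Require Import reals.
Set Implicit Arguments. Unset Strict Implicit. Unset Printing Implicit Defensive.
Import Order.TTheory GRing.Theory Num.Theory.
Local Open Scope ring_scope.

Section Fuzzy.
Variables (R : realType) (A X : finType).

Definition fuzzy_trans := A -> X -> A -> R.

Definition fuzzy_valued (f : fuzzy_trans) : Prop :=
  forall a x b, 0 <= f a x b <= 1.

(* f^* on a reversed word: f^*(a, v x, b) = max_c min (f^*(a,v,c)) (f(c,x,b)).
   The max is taken with base 0; all values are >= 0 so this is the max over A. *)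
Fixpoint fstar_rev (f : fuzzy_trans) (a : A) (rw : seq X) (b : A) : R :=
  match rw with
  | [::] => if a == b then 1 else 0
  | x :: rv => \big[Num.max/0]_(c : A) Num.min (fstar_rev f a rv c) (f c x b)
  end.

Definition fstar (f : fuzzy_trans) (a : A) (w : seq X) (b : A) : R :=
  fstar_rev f a (rev w) b.

Definition Freach (f : fuzzy_trans) (a : A) (w : seq X) : {set A} :=
  [set b | 0 < fstar f a w b].

Definition fuzzy_complete (f : fuzzy_trans) : Prop :=
  forall a x, Freach f a [:: x] != set0.

Definition D3merges_F (f : fuzzy_trans) (w : seq X) (a b : A) : Prop :=
  Freach f a w :&: Freach f b w != set0.

Definition D3directable_F (f : fuzzy_trans) : Prop :=
  exists w : seq X, exists c : A, forall a : A, c \in Freach f a w.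

Definition nfa := X -> rel A.

Definition nfa_step (N : nfa) (H : {set A}) (x : X) : {set A} :=
  [set b | [exists a in H, N x a b]].

Definition nfa_word (N : nfa) (H : {set A}) (w : seq X) : {set A} :=
  foldl (nfa_step N) H w.

Definition D3merges_N (N : nfa) (w : seq X) (a b : A) : Prop :=
  nfa_word N [set a] w :&: nfa_word N [set b] w != set0.

Definition assoc_nfa (f : fuzzy_trans) : nfa := fun x a b => 0 < f a x b.

End Fuzzy.

From HB Require Import structures.
From mathcomp Require Import all_boot all_order all_algebra.
From mathcomp Require Import reals.
Set Implicit Arguments. Unset Strict Implicit. Unset Printing Implicit Defensive.
Import Order.TTheory GRing.Theory Num.Theory.
Local Open Scope ring_scope.

(* A max-min composition is positive iff one of its terms has both factors
   positive, so f^*(a, w, b) > 0 iff some w-labelled path from a to b in the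
   associated NFA uses only transitions of positive weight: F(a, w) is the set
   reached from a by w in that NFA, and only the sign of f matters.
   For directability, synchronize the states one at a time: if w sends every
   state of S to c, completeness gives some d' reached from a new state d by w,
   and a word v merging c and d' makes w v send S and d to a common state. *)

Lemma bigmax_gt_id d (T : orderType d) (I : finType) (x : T) (F : I -> T) :
  (x < \big[Order.max/x]_i F i)%O = [exists i, x < F i]%O.
Proof.
rewrite ltNge -[RHS]negbK negb_exists; congr negb.
apply/bigmax_leP/forallP => [[_ leFx] i | leFx]; first by rewrite -leNgt leFx.
by split=> // i _; rewrite leNgt leFx.
Qed.

Section NFA.
Variables (A X : finType) (N : nfa A X).

Definition nfa_complete : Prop := forall a x, exists b, N x a b.

Definition D3directable_N : Prop :=
  exists w : seq X, exists c : A, forall a : A, c \in nfa_word N [set a] w.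

Lemma nfa_word_cat H w v : nfa_word N H (w ++ v) = nfa_word N (nfa_word N H w) v.
Proof. exact: foldl_cat. Qed.

Lemma nfa_word_rcons H w x :
  nfa_word N H (rcons w x) = nfa_step N (nfa_word N H w) x.
Proof. by rewrite -cats1 nfa_word_cat. Qed.

Lemma nfa_wordS w : {homo nfa_word N ^~ w : H K / H \subset K}.
Proof.
elim: w => [|x w IHw] H K sHK //=; apply: IHw.
apply/subsetP => b; rewrite !inE => /existsP[c /andP[Hc Ncb]].
by apply/existsP; exists c; rewrite Ncb (subsetP sHK).
Qed.

Lemma mem_nfa_word_cat a b c w v :
  b \in nfa_word N [set a] w -> c \in nfa_word N [set b] v ->
  c \in nfa_word N [set a] (w ++ v).
Proof.
rewrite -sub1set nfa_word_cat => /(nfa_wordS v) /subsetP; exact.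
Qed.

Lemma nfa_word1_neq0 a w : nfa_complete -> nfa_word N [set a] w != set0.
Proof.
move=> complete; elim/last_ind: w => [|w x /set0Pn[b wb]].
  by apply/set0Pn; exists a; rewrite set11.
have [c Nbc] := complete b x.
apply/set0Pn; exists c.
by rewrite nfa_word_rcons inE; apply/existsP; exists b; apply/andP.
Qed.

Lemma D3directable_N_merges :
  D3directable_N -> forall a b, exists w, D3merges_N N w a b.
Proof.
by case=> w [c sync] a b; exists w; apply/set0Pn; exists c; rewrite inE !sync.
Qed.

Section Synchronization.
Hypotheses (complete : nfa_complete)
           (merges : forall a b : A, exists w, D3merges_N N w a b).

Lemma nfa_synchronize_seq (c0 : A) (s : seq A) :
  exists w, exists c, forall a, a \in s -> c \in nfa_word N [set a] w.
Proof.
elim: s => [|d s [w [c sync]]]; first by exists [::], c0.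
have /set0Pn[d' wd'] := nfa_word1_neq0 d w complete.
have [v /set0Pn[e]] := merges c d'; rewrite inE => /andP[ve v'e].
exists (w ++ v), e => a; rewrite inE => /predU1P[-> | s_a].
- exact: mem_nfa_word_cat wd' v'e.
- exact: mem_nfa_word_cat (sync a s_a) ve.
Qed.

Lemma merges_D3directable_N (c0 : A) : D3directable_N.
Proof.
have [w [c sync]] := nfa_synchronize_seq c0 (enum A).
by exists w, c => a; apply: sync; rewrite mem_enum.
Qed.

End Synchronization.

Lemma D3directable_N_iff_merges (c0 : A) : nfa_complete ->
  D3directable_N <-> forall a b, exists w, D3merges_N N w a b.
Proof.
move=> complete; split; first exact: D3directable_N_merges.
by move=> merges; exact: merges_D3directable_N.
Qed.

End NFA.

Section FuzzyAutomaton.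
Variables (R : realType) (A X : finType) (f : fuzzy_trans R A X).

Lemma fstar_rev_gt0 rw a b :
  (0 < fstar_rev f a rw b) = (b \in nfa_word (assoc_nfa f) [set a] (rev rw)).
Proof.
elim: rw b => [|x rv IHrv] b /=.
  by rewrite in_set1 eq_sym; case: eqP; rewrite ?ltr01 ?ltxx.
rewrite rev_cons nfa_word_rcons inE bigmax_gt_id.
by apply: eq_existsb => c; rewrite lt_min IHrv.
Qed.

Lemma Freach_assoc_nfa a w : Freach f a w = nfa_word (assoc_nfa f) [set a] w.
Proof. by apply/setP => b; rewrite inE /fstar fstar_rev_gt0 revK. Qed.

Lemma D3merges_assoc_nfa w a b :
  D3merges_F f w a b <-> D3merges_N (assoc_nfa f) w a b.
Proof. by rewrite /D3merges_F /D3merges_N !Freach_assoc_nfa. Qed.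

Lemma D3directable_assoc_nfa :
  D3directable_F f <-> D3directable_N (assoc_nfa f).
Proof.
by rewrite /D3directable_F /D3directable_N; setoid_rewrite Freach_assoc_nfa.
Qed.

Lemma fuzzy_complete_assoc_nfa :
  fuzzy_complete f -> nfa_complete (assoc_nfa f).
Proof.
move=> complete a x; have /set0Pn[b] := complete a x.
rewrite Freach_assoc_nfa inE => /existsP[c /andP[]]; rewrite in_set1 => /eqP->.
by exists b.
Qed.

End FuzzyAutomaton.

Theorem lemma5p2 (R : realType) (A X : finType) (f : fuzzy_trans R A X)
    (hA : (0 < #|A|)%N) (hX : (0 < #|X|)%N) (hf : fuzzy_valued f) :
  (forall (w : seq X) (a b : A), D3merges_F f w a b <-> D3merges_N (assoc_nfa f) w a b)
  /\ (fuzzy_complete f ->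
      (D3directable_F f <-> forall a b : A, exists w : seq X, D3merges_F f w a b)).
Proof.
split=> [|complete]; first exact: D3merges_assoc_nfa.
have [c0 _] := card_gt0P hA.
rewrite D3directable_assoc_nfa.
rewrite (D3directable_N_iff_merges c0 (fuzzy_complete_assoc_nfa complete)).
by split=> merges a b; have [w] := merges a b; exists w; apply/D3merges_assoc_nfa.
Qed.
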